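(* For every integer $b\ge 0$, \[ \operatorname{trace}(A_b)=p(b)+\sum_{i=0}^{b-1}2^{b-i-1}p(i), \] where $p(m)$ denotes the number of unordered partitions of $m$ (with $p(0)=1$).
   Context: For an integer $b\ge 0$, an ordered partition of $b$ is a finite sequence $(q_1,\ldots,q_k)$ of positive integers summing to $b$ (for $b=0$ the only one is the empty sequence). An ordered partition $(q_1,\ldots,q_k)$ with $k\ge1$ is nontrivially embedded into an ordered partition $(r_1,\ldots,r_\ell)$ by a choice of indices $1\le i_2<\cdots<i_k\le \ell$ with $q_j\le r_{i_j}$ for $2\le j\le k$; different index tuples count as different embeddings. A card for $b$ balls is either (i) a trivial card, given by an ordered partition $q$ of $b$, with left and right partitions both $q$; or (ii) a throw card, given by ordered partitions $q$ ($k\ge1$ parts) and $r$ of $b$ together with a nontrivial embedding of $q$ into $r$, with left partition $q$ and right partition $r$. Different index tuples give different cards, and a throw card is distinct from the trivial card even when $q=r$. $A_b$ is the square matrix with rows and columns indexed by the ordered partitions of $b$ whose $(u,v)$ entry is the number of cards for $b$ balls with left partition $u$ and right partition $v$. *)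

From mathcomp Require Import all_boot all_order all_algebra.
Set Implicit Arguments. Unset Strict Implicit. Unset Printing Implicit Defensive.

Definition is_opart (b : nat) (q : seq nat) : bool :=
  all (fun x => 0 < x) q && (sumn q == b).

Fixpoint allseqs (m n : nat) : seq (seq nat) :=
  match n with
  | 0 => [:: [::]]
  | n'.+1 => [::] :: [seq x :: t | x <- iota 1 m, t <- allseqs m n']
  end.

Definition oparts (b : nat) : seq (seq nat) := filter (is_opart b) (allseqs b b).

(* number of nontrivial embeddings of q = (q_1,..,q_k), k >= 1, into
   r = (r_1,..,r_l): strictly increasing index tuples i_2 < ... < i_k
   (0-based here) with q_j <= r_{i_j} for 2 <= j <= k. *)
Definition n_embed (q r : seq nat) : nat :=
  if q is _ :: q' then
    #|[pred f : {ffun 'I_(size q') -> 'I_(size r)} |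
        [forall i : 'I_(size q'), forall j : 'I_(size q'), (i < j) ==> (f i < f j)] &&
        [forall j : 'I_(size q'), nth 0 q' j <= nth 0 r (f j)]]|
  else 0.

(* number of cards for b balls with left partition u and right partition v:
   the trivial card (if u = v) plus the throw cards *)
Definition ncards (u v : seq nat) : nat := (u == v) + n_embed u v.

Definition A (b : nat) : 'M[nat]_(size (oparts b)) :=
  \matrix_(i, j) ncards (nth [::] (oparts b) i) (nth [::] (oparts b) j).

Definition npart (m : nat) : nat :=
  count (fun q => is_opart m q && sorted geq q) (allseqs m m).

From mathcomp Require Import all_boot all_order all_algebra.
From mathcomp Require Import zify.

Set Implicit Arguments.
Unset Strict Implicit.
Unset Printing Implicit Defensive.

(* A self-embedding of a composition u = (u_1, ..., u_k) is an increasing map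
   from {2, ..., k} to {1, ..., k}, so it skips exactly one index s, and it is
   admissible iff u_1 >= ... >= u_s.  Counting the trivial card as the empty
   prefix, the diagonal entry of A_b at u is thus the number of nonincreasing
   prefixes of u.  Cutting u after such a prefix is a bijection onto pairs
   (partition of j, composition of b - j), so the trace is
   sum_j p(j) c(b - j), where c(0) = 1 and c(m + 1) = 2^m counts the
   compositions; the latter also follows by cutting off the first part. *)

Lemma sum_count (T : Type) (P : pred T) (s : seq T) :
  \sum_(x <- s) P x = count P s.
Proof. by elim: s => [|x s IHs]; rewrite ?big_nil ?big_cons ?IHs. Qed.

Lemma sum_nat_const_seq (T : Type) (s : seq T) (c : nat) : \sum_(x <- s) c = c * size s.
Proof. by rewrite big_const_seq count_predT iter_addn_0. Qed.

Lemma mem_allseqs m n q :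
  (q \in allseqs m n) = (size q <= n) && all (fun x => 0 < x <= m) q.
Proof.
elim: n q => [|n IHn] [|x q] //=; rewrite in_cons /=.
apply/allpairsPdep/andP => [[y [t [+ + [-> ->]]]]|[sz_q /andP[x_bnd q_bnd]]].
  by rewrite IHn mem_iota ltnS => y_bnd /andP[-> ->]; rewrite andbT; lia.
by exists x, q; rewrite mem_iota IHn q_bnd andbT; split=> //; lia.
Qed.

Lemma uniq_allseqs m n : uniq (allseqs m n).
Proof.
elim: n => [|n IHn] //=; apply/andP; split.
  by apply/allpairsPdep => -[x [t [_ _]]].
by apply: allpairs_uniq => [||[x t] [y u] _ _ /= [-> ->]]; rewrite ?iota_uniq.
Qed.

Lemma mem_oparts b q : (q \in oparts b) = is_opart b q.
Proof.
rewrite mem_filter mem_allseqs andb_idr // => /andP[pos_q /eqP <-].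
apply/andP; split; first by elim: q pos_q => //= x q IHq /andP[x_gt0 /IHq]; lia.
apply/allP => x x_q; rewrite (allP pos_q) //=.
by elim: q x_q {pos_q} => //= y q IHq; rewrite in_cons => /orP[/eqP->|/IHq]; lia.
Qed.

Lemma uniq_oparts b : uniq (oparts b).
Proof. exact/filter_uniq/uniq_allseqs. Qed.

Lemma is_opart_cat b p r :
  is_opart b (p ++ r) = [&& sumn p <= b, is_opart (sumn p) p & is_opart (b - sumn p) r].
Proof.
rewrite /is_opart all_cat sumn_cat eqxx andbT.
case: (all _ p) (all _ r) => [] [] /=; rewrite ?andbF //.
apply/eqP/andP => [<-|[? /eqP]]; first by rewrite leq_addr addKn.
lia.
Qed.

Section Splits.

Variable b : nat.

Definition splits : seq (seq nat * seq nat) :=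
  [seq (take k u, drop k u) | u <- oparts b, k <- iota 0 (size u).+1].

Definition opart_pairs : seq (seq nat * seq nat) :=
  [seq pr | j <- iota 0 b.+1, pr <- [seq (p, r) | p <- oparts j, r <- oparts (b - j)]].

Lemma mem_splits p r : ((p, r) \in splits) = is_opart b (p ++ r).
Proof.
apply/allpairsPdep/idP => [[u [k [u_b _ [-> ->]]]]|pr_b].
  by rewrite cat_take_drop -mem_oparts.
exists (p ++ r), (size p); rewrite mem_oparts mem_iota size_cat take_size_cat //.
by rewrite drop_size_cat // add0n ltnS; split=> //; apply: leq_addr.
Qed.

Lemma mem_opart_pairs p r : ((p, r) \in opart_pairs) = is_opart b (p ++ r).
Proof.
apply/allpairsPdep/idP => [[j [_ [j_b /allpairsP[[p' r'] [+ + ->]] [-> ->]]]]|].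
  rewrite mem_iota in j_b; rewrite /= !mem_oparts is_opart_cat => /[dup] p_j /andP[_ /eqP ->].
  by rewrite p_j andTb => ->; rewrite andbT; lia.
rewrite is_opart_cat => /and3P[p_le p_j r_bj].
exists (sumn p), (p, r); split=> //; first by rewrite mem_iota; lia.
by apply/allpairsP; exists (p, r); rewrite !mem_oparts.
Qed.

Lemma uniq_splits : uniq splits.
Proof.
apply: allpairs_uniq_dep; rewrite ?uniq_oparts //; first by move=> *; apply: iota_uniq.
move=> _ _ /allpairsPdep[u [k [_ + ->]]] /allpairsPdep[v [l [_ + ->]]] /=.
rewrite !mem_iota !ltnS => /andP[_ k_u] /andP[_ l_v] [eq_take eq_drop].
have eq_uv : u = v by rewrite -(cat_take_drop k u) -(cat_take_drop l v) eq_take eq_drop.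
by move: (congr1 size eq_take); rewrite -eq_uv in l_v *; rewrite !size_takel // => ->.
Qed.

Lemma uniq_opart_pairs : uniq opart_pairs.
Proof.
apply: allpairs_uniq_dep; rewrite ?iota_uniq //.
  move=> j _; apply: allpairs_uniq => [||[p r] [p' r'] _ _ //]; exact: uniq_oparts.
move=> _ _ /allpairsPdep[j [pr [_ + ->]]] /allpairsPdep[j' [pr' [_ + ->]]] /=.
move=> /allpairsP[[p r] [p_j _ ->]] /allpairsP[[p' r'] [+ _ ->]] [eq_p ->] /=.
by rewrite -eq_p; move: p_j; rewrite !mem_oparts => /andP[_ /eqP <-] /andP[_ /eqP <-].
Qed.

Lemma perm_splits : perm_eq splits opart_pairs.
Proof.
apply: uniq_perm; rewrite ?uniq_splits ?uniq_opart_pairs // => -[p r].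
by rewrite mem_splits mem_opart_pairs.
Qed.

End Splits.

Lemma big_splits (R : Type) (idx : R) (op : Monoid.com_law idx) b
    (F : seq nat -> seq nat -> R) :
  \big[op/idx]_(u <- oparts b) \big[op/idx]_(0 <= k < (size u).+1)
    F (take k u) (drop k u) =
  \big[op/idx]_(0 <= j < b.+1) \big[op/idx]_(p <- oparts j)
    \big[op/idx]_(r <- oparts (b - j)) F p r.
Proof.
transitivity (\big[op/idx]_(pr <- splits b) F pr.1 pr.2); first by rewrite big_allpairs_dep.
rewrite (perm_big _ (perm_splits b)) big_allpairs_dep.
by apply: eq_bigr => j _; rewrite big_allpairs.
Qed.

Lemma count_singleton_oparts j : count (fun p => size p == 1) (oparts j) = (0 < j).
Proof.
rewrite -(@eq_in_count _ (pred1 [:: j])) ?count_uniq_mem ?uniq_oparts //.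
  by rewrite mem_oparts /is_opart /= addn0 eqxx !andbT.
move=> [|y [|z p]] //; rewrite mem_oparts /is_opart /=.
  by rewrite addn0 andbT => /andP[_ /eqP ->]; rewrite eqxx.
by rewrite eqseq_cons andbF.
Qed.

Lemma size_oparts_rec b : size (oparts b.+1) = \sum_(0 <= i < b.+1) size (oparts i).
Proof.
have := big_splits addn b.+1 (fun p _ => nat_of_bool (size p == 1)).
have one_first_part u : u \in oparts b.+1 ->
    \sum_(0 <= k < (size u).+1) (size (take k u) == 1) = 1.
  rewrite mem_oparts => /andP[_]; case: u => [//|y u _].
  rewrite (eq_big_seq (fun k => nat_of_bool (k == 1))) ?sum_count ?count_uniq_mem ?iota_uniq //.
  by move=> k; rewrite mem_iota => /andP[_ k_le]; rewrite size_takel.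
rewrite (eq_big_seq _ one_first_part) sum1_size => ->.
rewrite big_nat_recl // [RHS]big_nat_rev big_seq1 big1 // add0n.
apply: eq_bigr => i _.
under eq_bigr => p _ do rewrite sum_nat_const_seq.
by rewrite -big_distrl sum_count count_singleton_oparts /= mul1n.
Qed.

Lemma size_oparts m : size (oparts m.+1) = 2 ^ m.
Proof.
elim: m => [//|m IHm].
by rewrite size_oparts_rec big_nat_recr //= -size_oparts_rec IHm expnS mul2n addnn.
Qed.

Lemma npart_count m : npart m = count (sorted geq) (oparts m).
Proof. by rewrite /npart count_filter; apply: eq_count => q; rewrite /= andbC. Qed.

Lemma incr_ord_gap n m (f : 'I_n -> 'I_m) :
  {homo f : i j / i < j} ->
  forall i j : 'I_n, i <= j -> f i + (j - i) <= f j.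
Proof.
move=> f_incr i j le_ij; have [d def_j] : exists d, j = i + d :> nat.
  by exists (j - i); rewrite subnKC.
elim: d j def_j {le_ij} => [|d IHd] j def_j.
  by rewrite (_ : j = i) ?subnn ?addn0 //; apply: val_inj; rewrite /= def_j addn0.
have lt_id : i + d < n by have := ltn_ord j; lia.
have := IHd (Ordinal lt_id) erefl; have := f_incr (Ordinal lt_id) j.
by rewrite /= def_j; lia.
Qed.

Lemma incr_ord_lift n (f : 'I_n -> 'I_n.+1) :
  {homo f : i j / i < j} -> exists s : 'I_n.+1, f =1 lift s.
Proof.
move=> f_incr; have gap := incr_ord_gap f_incr.
have f_inj : injective f.
  by move=> i j eq_f; apply/val_inj/eqP; case: ltngtP => // /f_incr; rewrite eq_f ltnn.
have [s] : exists s, s \in [predC codom f].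
  apply/card_gt0P; move: (cardC (mem (codom f))).
  by rewrite card_codom // !card_ord => card_n; rewrite -(ltn_add2l n) addn0 card_n.
rewrite inE => s_miss; exists s => j.
have f_neq k : f k != s :> nat.
  by apply: contra s_miss => /eqP f_k; rewrite (_ : s = f k) ?codom_f //; apply: val_inj.
have f_ge (k : 'I_n) : k <= f k.
  have lt0n : 0 < n by have := ltn_ord k; lia.
  by have := gap (Ordinal lt0n) k (leq0n k); rewrite /=; lia.
have f_le (k : 'I_n) : f k <= k.+1.
  have lt_last : n.-1 < n by have := ltn_ord k; lia.
  have le_k : k <= Ordinal lt_last by have := ltn_ord k; rewrite /=; lia.
  by have := gap k _ le_k; have := ltn_ord (f (Ordinal lt_last)); rewrite /=; lia.
apply: val_inj; rewrite /= /bump; case: leqP => [le_sj|lt_js].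
  have lt_s : s < n by have := ltn_ord j; lia.
  have := gap (Ordinal lt_s) j le_sj; have := f_neq (Ordinal lt_s).
  by have := f_ge (Ordinal lt_s); have := f_ge j; have := f_le j; rewrite /=; lia.
have lt_s : s.-1 < n by have := ltn_ord s; lia.
have le_j : j <= Ordinal lt_s by rewrite /=; lia.
have := gap j _ le_j; have := f_neq (Ordinal lt_s); have := f_le (Ordinal lt_s).
by have := f_ge j; have := f_le j; rewrite /=; lia.
Qed.

Lemma lift_sorted_geq x t (s : 'I_(size t).+1) :
  [forall j : 'I_(size t), nth 0 t j <= nth 0 (x :: t) (lift s j)] =
  sorted geq (take s.+1 (x :: t)).
Proof.
have take_sx : take s.+1 (x :: t) = x :: take s t by [].
apply/forallP/(sortedP 0) => [embed_s i|sorted_s j].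
  rewrite size_take_min minnSS ltnS leq_min => /andP[lt_is lt_it].
  rewrite !nth_take ?take_sx //; last exact: ltnW.
  have := embed_s (Ordinal lt_it).
  by rewrite /= /bump (_ : s <= i = false) // leqNgt lt_is.
rewrite /= /bump; case: (leqP s j) => [//|lt_js].
have := sorted_s j; rewrite size_take_min minnSS ltnS leq_min lt_js ltn_ord.
by rewrite !nth_take ?take_sx //; [apply | exact: ltnW].
Qed.

Lemma n_embed_self x t :
  n_embed (x :: t) (x :: t) = #|[pred s : 'I_(size t).+1 | sorted geq (take s.+1 (x :: t))]|.
Proof.
pose lift_fun (s : 'I_(size t).+1) : {ffun 'I_(size t) -> 'I_(size t).+1} := [ffun j => lift s j].
have lift_fun_inj : injective lift_fun.
  move=> s1 s2 /ffunP eq_lift; apply/eqP/negPn/negP => /unlift_some[j def_s2 _].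
  by have := eq_lift j; rewrite !ffunE -def_s2 => /eqP; rewrite eq_liftF.
rewrite /n_embed -(card_imset _ lift_fun_inj); apply: eq_card => f; rewrite !inE.
apply/andP/imsetP => [[/forallP f_incr /forallP embed_f]|[s]].
  have [s f_lift] := @incr_ord_lift _ f (fun i j => implyP (forallP (f_incr i) j)).
  exists s; last by apply/ffunP => j; rewrite ffunE f_lift.
  by rewrite inE -lift_sorted_geq; apply/forallP => j; rewrite -f_lift.
rewrite inE -lift_sorted_geq => /forallP embed_s ->; split; apply/forallP => i.
  by apply/forallP => j; apply/implyP; rewrite !ffunE /= !ltnNge leq_bump2.
by rewrite ffunE; apply: embed_s.
Qed.

Lemma ncards_self u : ncards u u = \sum_(0 <= k < (size u).+1) sorted geq (take k u).
Proof.
rewrite /ncards eqxx big_nat_recl //; case: u => [|x t].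
  by rewrite big_geq.
by rewrite n_embed_self big_mkord -sum1_card big_mkcond.
Qed.

Lemma trace_A b : (\tr (A b))%R = \sum_(u <- oparts b) ncards u u.
Proof.
rewrite /mxtrace (big_nth [::]) big_mkord.
by apply: eq_bigr => i _; rewrite mxE.
Qed.

Theorem theorem10 (b : nat) :
  (\tr (A b))%R = (npart b + \sum_(i < b) 2 ^ (b - i - 1) * npart i)%N.
Proof.
rewrite trace_A (eq_bigr _ (fun u _ => ncards_self u)).
rewrite (big_splits addn b (fun p _ => nat_of_bool (sorted geq p))) big_mkord.
rewrite big_ord_recr /= subnn addnC; congr (_ + _).
  rewrite npart_count -sum_count; apply: eq_bigr => p _.
  by rewrite sum_nat_const_seq muln1.
apply: eq_bigr => i _; rewrite npart_count -sum_count big_distrr.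
apply: eq_bigr => p _; rewrite sum_nat_const_seq mulnC.
have [k def_k] : exists k, b - i = k.+1 by exists (b - i - 1); have := ltn_ord i; lia.
by rewrite def_k subn1 size_oparts.
Qed.
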